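(* Let $\ell>0$ and $\Omega_\ell=(0,\pi)\times(-\ell,\ell)$. Consider the eigenvalue problem \[ \begin{cases} \Delta^2 u=-\lambda \Delta u, & \text{in }\Omega_\ell,\\ u=0, & \text{on }\partial\Omega_\ell,\\ u_y=0, & \text{on }(0,\pi)\times\{-\ell,\ell\},\\ u_{xx}=0, & \text{on }\{0,\pi\}\times(-\ell,\ell). \end{cases} \] Then for every $k,m\in\mathbb N^*=\{1,2,\dots\}$ there exists a unique $\gamma_{k,m}\in\left(\frac{k\pi}{2\ell},\frac{(k+1)\pi}{2\ell}\right)$ satisfying $\gamma\tan(\gamma\ell)=-m\tanh(m\ell)$ if $k$ is odd, and $\frac{\tan(\gamma\ell)}{\gamma}=\frac{\tanh(m\ell)}{m}$ if $k$ is even. Setting $\lambda_{k,m}=m^2+\gamma_{k,m}^2$, the problem above admits the eigenfunction \[ u_{k,m}(x,y)=h_{k,m}(y)\sin(mx) \] with eigenvalue $\lambda_{k,m}$, where $h_{k,m}$ is a nontrivial solution of \[ \begin{cases} h^{(iv)}(y)+(\lambda-2m^2)h''(y)+m^2(m^2-\lambda)h(y)=0, & y\in(-\ell,\ell),\\ h(-\ell)=h(\ell)=0,\\ h'(-\ell)=h'(\ell)=0, \end{cases} \] with $\lambda=\lambda_{k,m}$; explicitly, with $\gamma=\gamma_{k,m}$, $h_{k,m}(y)=\cosh(my)-\frac{\cosh(m\ell)}{\cos(\gamma\ell)}\cos(\gamma y)$ if $k$ is odd and $h_{k,m}(y)=\sinh(my)-\frac{\sinh(m\ell)}{\sin(\gamma\ell)}\sin(\gamma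 y)$ if $k$ is even. Moreover: (a) if $k$ is odd then $h_{k,m}$ is even, and if $k$ is even then $h_{k,m}$ is odd; (b) if $k=1$ then $h_{1,m}$ is strictly positive on $(-\ell,\ell)$.
   Context: $\Delta$ denotes the Laplacian in $\mathbb R^2$ with coordinates $(x,y)$; subscripts denote partial derivatives. *)

From Stdlib Require Import Reals Lra.
Open Scope R_scope.

Definition dx (u w : R -> R -> R) : Prop :=
  forall x y, derivable_pt_lim (fun t => u t y) x (w x y).
Definition dy (u w : R -> R -> R) : Prop :=
  forall x y, derivable_pt_lim (fun t => u x t) y (w x y).

Definition laplacian_is (u L : R -> R -> R) : Prop :=
  exists ux uxx uy uyy,
    dx u ux /\ dx ux uxx /\ dy u uy /\ dy uy uyy /\
    forall x y, L x y = uxx x y + uyy x y.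

Definition in_Omega (l x y : R) : Prop := 0 < x < PI /\ - l < y < l.

Definition on_boundary (l x y : R) : Prop :=
  ((x = 0 \/ x = PI) /\ - l <= y <= l) \/ (0 <= x <= PI /\ (y = - l \/ y = l)).

Definition gamma_eq (k m : nat) (l g : R) : Prop :=
  if Nat.odd k then g * tan (g * l) = - (INR m * tanh (INR m * l))
  else tan (g * l) / g = tanh (INR m * l) / INR m.

Definition h_fun (k m : nat) (l g : R) (y : R) : R :=
  if Nat.odd k then cosh (INR m * y) - cosh (INR m * l) / cos (g * l) * cos (g * y)
  else sinh (INR m * y) - sinh (INR m * l) / sin (g * l) * sin (g * y).

Definition u_fun (k m : nat) (l g : R) (x y : R) : R :=
  h_fun k m l g y * sin (INR m * x).

(** Separating variables, [u = h(y) sin(m x)] meets the hinged conditions on [x = 0, π]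
    and turns [Δ²u = -λΔu] into a fourth-order ODE for [h] whose characteristic roots
    are [±m] and [±iγ] with [λ = m² + γ²].  The even profile [cosh(m y) - A cos(γ y)]
    (resp. the odd profile [sinh(m y) - B sin(γ y)]) satisfies [h(±ℓ) = h'(±ℓ) = 0]
    exactly when [γ] solves the transcendental equation.  Clearing denominators, that
    equation changes sign between the consecutive zeros [kπ/(2ℓ)] and [(k+1)π/(2ℓ)] of
    [cos(γℓ) sin(γℓ)], and [γ tan(γℓ)], [tan(γℓ)/γ] are strictly increasing there because
    [γℓ > 1]; this gives existence and uniqueness of [γ_{k,m}].  For [k = 1] one has
    [h''' > 0] on [(0,ℓ)], so [h'] is strictly convex with [h'(0) = h'(ℓ) = 0], hence
    negative on [(0,ℓ)], and [h] decreases to [h(ℓ) = 0]. *)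

From Stdlib Require Import Reals Lra Lia.
From Coquelicot Require Import Coquelicot.
Open Scope R_scope.

Lemma cosh_pos x : 0 < cosh x.
Proof. unfold cosh; pose proof (exp_pos x); pose proof (exp_pos (- x)); lra. Qed.

Lemma sinh_pos x : 0 < x -> 0 < sinh x.
Proof. intro Hx; rewrite <- sinh_0; now apply sinh_lt. Qed.

Lemma tanh_pos x : 0 < x -> 0 < tanh x.
Proof. intro Hx; unfold tanh; apply Rdiv_lt_0_compat; [apply sinh_pos | apply cosh_pos]; lra. Qed.

Lemma cosh_opp x : cosh (- x) = cosh x.
Proof. unfold cosh; rewrite Ropp_involutive; field. Qed.

Lemma sinh_opp x : sinh (- x) = - sinh x.
Proof. unfold sinh; rewrite Ropp_involutive; field. Qed.

Lemma sin_cos_neq0_quarter k t :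
  INR k * (PI / 2) < t < (INR k + 1) * (PI / 2) -> sin t <> 0 /\ cos t <> 0.
Proof.
  intros [Hlo Hhi]; pose proof PI_RGT_0.
  rewrite INR_IZR_INZ in Hlo, Hhi.
  split; intro H0.
  - destruct (sin_eq_0_0 _ H0) as [z ->].
    assert (H1 : IZR (Z.of_nat k) < IZR (2 * z)) by (rewrite mult_IZR; nra).
    assert (H2 : IZR (2 * z) < IZR (Z.of_nat k + 1)) by (rewrite mult_IZR, plus_IZR; nra).
    apply lt_IZR in H1; apply lt_IZR in H2; lia.
  - destruct (cos_eq_0_0 _ H0) as [z ->].
    assert (H1 : IZR (Z.of_nat k) < IZR (2 * z + 1)) by (rewrite plus_IZR, mult_IZR; nra).
    assert (H2 : IZR (2 * z + 1) < IZR (Z.of_nat k + 1)) by (rewrite !plus_IZR, mult_IZR; nra).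
    apply lt_IZR in H1; apply lt_IZR in H2; lia.
Qed.

Lemma cos_odd_quarter k : Nat.odd k = true -> cos (INR k * (PI / 2)) = 0.
Proof.
  intro Hk; destruct (proj1 (Nat.odd_spec k) Hk) as [j ->].
  apply cos_eq_0_1; exists (Z.of_nat j).
  rewrite <- INR_IZR_INZ, plus_INR, mult_INR; simpl; field.
Qed.

Lemma sin_even_quarter k : Nat.odd k = false -> sin (INR k * (PI / 2)) = 0.
Proof.
  intro Hk.
  assert (Hev : Nat.even k = true) by (rewrite <- Nat.negb_odd, Hk; reflexivity).
  destruct (proj1 (Nat.even_spec k) Hev) as [j ->].
  apply sin_eq_0_1; exists (Z.of_nat j).
  rewrite <- INR_IZR_INZ, mult_INR; simpl; field.
Qed.

Lemma IVT_open (F : R -> R) a b :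
  continuity F -> a < b -> F a * F b < 0 -> exists x, a < x < b /\ F x = 0.
Proof.
  intros CF Hab Hsign.
  destruct (IVT_gen F a b 0 CF) as [x [Hx Fx]].
  { unfold Rmin, Rmax; destruct Rle_dec; nra. }
  rewrite Rmin_left, Rmax_right in Hx by lra.
  assert (x <> a) by (intro E; rewrite <- E, Fx in Hsign; nra).
  assert (x <> b) by (intro E; rewrite <- E, Fx in Hsign; nra).
  exists x; split; [lra | exact Fx].
Qed.

Lemma derive_pos_injective (f f' : R -> R) a b :
  (forall x, a < x < b -> derivable_pt_lim f x (f' x)) ->
  (forall x, a < x < b -> 0 < f' x) ->
  forall x y, a < x < b -> a < y < b -> f x = f y -> x = y.
Proof.
  intros Df Pf.
  assert (Hincr : forall x y, a < x < b -> a < y < b -> x < y -> f x < f y).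
  { intros x y Hx Hy Hxy.
    destruct (MVT_cor2 f f' x y Hxy) as [c [Ec Hc]]; [intros c Hc; apply Df; lra |].
    assert (0 < f' c * (y - x)) by (apply Rmult_lt_0_compat; [apply Pf |]; lra).
    lra. }
  intros x y Hx Hy Exy.
  destruct (Rtotal_order x y) as [H | [H | H]]; [| exact H |].
  - specialize (Hincr x y Hx Hy H); lra.
  - specialize (Hincr y x Hy Hx H); lra.
Qed.

Lemma gamma_interval_scale l k g : 0 < l ->
  INR k * PI / (2 * l) < g < (INR k + 1) * PI / (2 * l) ->
  INR k * (PI / 2) < g * l < (INR k + 1) * (PI / 2).
Proof.
  intros hl [H0 H1].
  apply (Rmult_lt_compat_r l) in H0; [| exact hl].
  apply (Rmult_lt_compat_r l) in H1; [| exact hl].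
  replace (INR k * PI / (2 * l) * l) with (INR k * (PI / 2)) in H0 by (field; lra).
  replace ((INR k + 1) * PI / (2 * l) * l) with ((INR k + 1) * (PI / 2)) in H1 by (field; lra).
  lra.
Qed.

Lemma gamma_interval_gt1 l k g : 0 < l -> (1 <= k)%nat ->
  INR k * PI / (2 * l) < g < (INR k + 1) * PI / (2 * l) -> 1 < g * l.
Proof.
  intros hl hk Hg.
  pose proof (gamma_interval_scale l k g hl Hg); pose proof PI2_3_2.
  assert (1 <= INR k) by (apply (le_INR 1); exact hk).
  nra.
Qed.

Lemma gamma_interval_pos l k g : 0 < l ->
  INR k * PI / (2 * l) < g < (INR k + 1) * PI / (2 * l) -> 0 < g.
Proof.
  intros hl Hg; pose proof (pos_INR k); pose proof PI_RGT_0.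
  assert (0 <= INR k * PI / (2 * l)) by (apply Rmult_le_pos; [nra | left; apply Rinv_0_lt_compat; lra]).
  lra.
Qed.

Lemma odd_gamma_root l k a : 0 < l -> Nat.odd k = true -> 0 < a ->
  exists g, INR k * PI / (2 * l) < g < (INR k + 1) * PI / (2 * l) /\
    g * tan (g * l) = - a /\
    forall g', INR k * PI / (2 * l) < g' < (INR k + 1) * PI / (2 * l) ->
      g' * tan (g' * l) = - a -> g' = g.
Proof.
  intros hl Hk ha.
  assert (hk : (1 <= k)%nat) by (destruct k; [discriminate | lia]).
  assert (Hk1 : 1 <= INR k) by (apply (le_INR 1); exact hk).
  pose proof PI_RGT_0.
  set (g0 := INR k * PI / (2 * l)); set (g1 := (INR k + 1) * PI / (2 * l)).
  assert (E0 : g0 * l = INR k * (PI / 2)) by (unfold g0; field; lra).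
  assert (E1 : g1 * l = INR k * (PI / 2) + PI / 2) by (unfold g1; field; lra).
  assert (Hg0 : 0 < g0) by (unfold g0; apply Rdiv_lt_0_compat; nra).
  assert (Hg01 : g0 < g1) by (apply (Rmult_lt_reg_r l); lra).
  (* [g tan(gl) = -a] with the denominator [cos(gl)] cleared *)
  set (F := fun g => g * sin (g * l) + a * cos (g * l)).
  destruct (IVT_open F g0 g1) as [x [Hx Fx]]; [unfold F; reg | exact Hg01 | |].
  { set (s := sin (INR k * (PI / 2))).
    pose proof (sin2_cos2 (INR k * (PI / 2))) as Hs2.
    rewrite cos_odd_quarter in Hs2 by exact Hk; fold s in Hs2; unfold Rsqr in Hs2.
    unfold F; rewrite E0, E1, sin_plus, cos_plus, sin_PI2, cos_PI2, cos_odd_quarter by exact Hk.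
    fold s; replace (_ * _) with (- (a * g0) * (s * s)) by ring.
    replace (s * s) with 1 by lra; nra. }
  destruct (sin_cos_neq0_quarter k (x * l)) as [_ Hc]; [apply gamma_interval_scale; auto |].
  assert (Ex : x * tan (x * l) = - a).
  { unfold F in Fx; unfold tan; field_simplify_eq; [lra | exact Hc]. }
  exists x; split; [exact Hx |]; split; [exact Ex |].
  intros g' Hg' Eg'.
  apply (derive_pos_injective (fun g => g * tan (g * l))
           (fun g => tan (g * l) + g * l * (1 + tan (g * l) ^ 2)) g0 g1); auto.
  - intros c Hcg.
    destruct (sin_cos_neq0_quarter k (c * l)) as [_ Hcc]; [apply gamma_interval_scale; auto |].
    apply is_derive_Reals; unfold tan; auto_derive; [auto | field; exact Hcc].
  - intros c Hcg.
    assert (1 < c * l) by (apply (gamma_interval_gt1 l k); auto).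
    cbv beta; set (T := tan (c * l)).
    assert (0 <= (c * l - 1) * (1 + T ^ 2)) by (apply Rmult_le_pos; nra).
    nra.
  - rewrite Eg', Ex; reflexivity.
Qed.

Lemma even_gamma_root l k c : 0 < l -> Nat.odd k = false -> (1 <= k)%nat -> 0 < c ->
  exists g, INR k * PI / (2 * l) < g < (INR k + 1) * PI / (2 * l) /\
    tan (g * l) / g = c /\
    forall g', INR k * PI / (2 * l) < g' < (INR k + 1) * PI / (2 * l) ->
      tan (g' * l) / g' = c -> g' = g.
Proof.
  intros hl Hk hk hc.
  assert (Hk1 : 1 <= INR k) by (apply (le_INR 1); exact hk).
  pose proof PI_RGT_0.
  set (g0 := INR k * PI / (2 * l)); set (g1 := (INR k + 1) * PI / (2 * l)).
  assert (E0 : g0 * l = INR k * (PI / 2)) by (unfold g0; field; lra).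
  assert (E1 : g1 * l = INR k * (PI / 2) + PI / 2) by (unfold g1; field; lra).
  assert (Hg0 : 0 < g0) by (unfold g0; apply Rdiv_lt_0_compat; nra).
  assert (Hg01 : g0 < g1) by (apply (Rmult_lt_reg_r l); lra).
  (* [tan(gl)/g = c] with the denominators [g cos(gl)] cleared *)
  set (F := fun g => sin (g * l) - c * g * cos (g * l)).
  destruct (IVT_open F g0 g1) as [x [Hx Fx]]; [unfold F; reg | exact Hg01 | |].
  { set (C := cos (INR k * (PI / 2))).
    pose proof (sin2_cos2 (INR k * (PI / 2))) as Hc2.
    rewrite sin_even_quarter in Hc2 by exact Hk; fold C in Hc2; unfold Rsqr in Hc2.
    unfold F; rewrite E0, E1, sin_plus, cos_plus, sin_PI2, cos_PI2, sin_even_quarter by exact Hk.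
    fold C; replace (_ * _) with (- (c * g0) * (C * C)) by ring.
    replace (C * C) with 1 by lra; nra. }
  assert (Hxpos : 0 < x) by lra.
  destruct (sin_cos_neq0_quarter k (x * l)) as [_ Hc]; [apply gamma_interval_scale; auto |].
  assert (Ex : tan (x * l) / x = c).
  { unfold F in Fx; unfold tan; field_simplify_eq; [lra | split; lra || exact Hc]. }
  exists x; split; [exact Hx |]; split; [exact Ex |].
  intros g' Hg' Eg'.
  apply (derive_pos_injective (fun g => tan (g * l) / g)
           (fun g => (g * l * (1 + tan (g * l) ^ 2) - tan (g * l)) / g ^ 2) g0 g1); auto.
  - intros t Htg.
    destruct (sin_cos_neq0_quarter k (t * l)) as [_ Htc]; [apply gamma_interval_scale; auto |].
    apply is_derive_Reals; unfold tan; auto_derive; [split; [exact Htc | lra] | field; split; [exact Htc | lra]].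
  - intros t Htg.
    assert (1 < t * l) by (apply (gamma_interval_gt1 l k); auto).
    cbv beta; set (T := tan (t * l)).
    assert (0 <= (t * l - 1) * (1 + T ^ 2)) by (apply Rmult_le_pos; nra).
    apply Rdiv_lt_0_compat; nra.
  - rewrite Eg', Ex; reflexivity.
Qed.

Lemma gamma_eq_unique_root l k m : 0 < l -> (1 <= k)%nat -> (1 <= m)%nat ->
  exists g, INR k * PI / (2 * l) < g < (INR k + 1) * PI / (2 * l) /\
    gamma_eq k m l g /\
    forall g', INR k * PI / (2 * l) < g' < (INR k + 1) * PI / (2 * l) ->
      gamma_eq k m l g' -> g' = g.
Proof.
  intros hl hk hm.
  assert (Hm : 0 < INR m) by (apply lt_0_INR; lia).
  assert (Hth : 0 < tanh (INR m * l)) by (apply tanh_pos; nra).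
  unfold gamma_eq; destruct (Nat.odd k) eqn:Hk.
  - apply odd_gamma_root; auto; nra.
  - apply even_gamma_root; auto; apply Rdiv_lt_0_compat; auto.
Qed.

Definition separated_mode (l lam mR : R) (h : R -> R) : Prop :=
  let u := fun x y => h y * sin (mR * x) in
  (exists x y, u x y <> 0) /\
  (exists L L2, laplacian_is u L /\ laplacian_is L L2 /\
     forall x y, in_Omega l x y -> L2 x y = - lam * L x y) /\
  (forall x y, on_boundary l x y -> u x y = 0) /\
  (exists uy, dy u uy /\ forall x, 0 < x < PI -> uy x (- l) = 0 /\ uy x l = 0) /\
  (exists ux uxx, dx u ux /\ dx ux uxx /\
     forall y, - l < y < l -> uxx 0 y = 0 /\ uxx PI y = 0) /\
  (exists y, h y <> 0) /\
  (exists h1 h2 h3 h4 : R -> R,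
     (forall y, derivable_pt_lim h y (h1 y)) /\
     (forall y, derivable_pt_lim h1 y (h2 y)) /\
     (forall y, derivable_pt_lim h2 y (h3 y)) /\
     (forall y, derivable_pt_lim h3 y (h4 y)) /\
     (forall y, - l < y < l ->
        h4 y + (lam - 2 * mR ^ 2) * h2 y + mR ^ 2 * (mR ^ 2 - lam) * h y = 0) /\
     h (- l) = 0 /\ h l = 0 /\ h1 (- l) = 0 /\ h1 l = 0).

Lemma dx_sin_product mR (h : R -> R) :
  dx (fun x y => h y * sin (mR * x)) (fun x y => h y * (mR * cos (mR * x))).
Proof. intros x y; apply is_derive_Reals; auto_derive; [auto | ring]. Qed.

Lemma dx_cos_product mR (h : R -> R) :
  dx (fun x y => h y * (mR * cos (mR * x))) (fun x y => h y * (- mR ^ 2 * sin (mR * x))).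
Proof. intros x y; apply is_derive_Reals; auto_derive; [auto | ring]. Qed.

Lemma dy_product (h h' f : R -> R) : (forall y, derivable_pt_lim h y (h' y)) ->
  dy (fun x y => h y * f x) (fun x y => h' y * f x).
Proof.
  intros Dh x y; apply is_derive_Reals.
  apply (is_derive_ext (fun t => f x * h t)); [intro t; apply Rmult_comm |].
  rewrite (Rmult_comm (h' y)); apply is_derive_scal, is_derive_Reals, Dh.
Qed.

Lemma laplacian_sin_product mR (h h1 h2 : R -> R) :
  (forall y, derivable_pt_lim h y (h1 y)) -> (forall y, derivable_pt_lim h1 y (h2 y)) ->
  laplacian_is (fun x y => h y * sin (mR * x))
               (fun x y => (h2 y - mR ^ 2 * h y) * sin (mR * x)).
Proof.
  intros D1 D2.
  exists (fun x y => h y * (mR * cos (mR * x))), (fun x y => h y * (- mR ^ 2 * sin (mR * x))),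
    (fun x y => h1 y * sin (mR * x)), (fun x y => h2 y * sin (mR * x)).
  split; [apply dx_sin_product |]; split; [apply dx_cos_product |].
  split; [apply dy_product, D1 |]; split; [apply dy_product, D2 |].
  intros x y; ring.
Qed.

Lemma separated_mode_of_profile l lam n (h h1 h2 h3 h4 : R -> R) : (1 <= n)%nat ->
  (forall y, derivable_pt_lim h y (h1 y)) -> (forall y, derivable_pt_lim h1 y (h2 y)) ->
  (forall y, derivable_pt_lim h2 y (h3 y)) -> (forall y, derivable_pt_lim h3 y (h4 y)) ->
  (forall y, h4 y + (lam - 2 * INR n ^ 2) * h2 y + INR n ^ 2 * (INR n ^ 2 - lam) * h y = 0) ->
  h (- l) = 0 -> h l = 0 -> h1 (- l) = 0 -> h1 l = 0 -> (exists y, h y <> 0) ->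
  separated_mode l lam (INR n) h.
Proof.
  intros hn D1 D2 D3 D4 Hode Hl1 Hl2 H1l1 H1l2 [y0 Hy0].
  assert (hm : 0 < INR n) by (apply lt_0_INR; lia).
  assert (Hsin_PI : sin (INR n * PI) = 0)
    by (apply sin_eq_0_1; exists (Z.of_nat n); rewrite <- INR_IZR_INZ; reflexivity).
  set (mR := INR n) in *.
  assert (Dlap : forall y, derivable_pt_lim (fun y => h2 y - mR ^ 2 * h y) y
                                            (h3 y - mR ^ 2 * h1 y)).
  { intro y; exact (derivable_pt_lim_minus h2 (fun y => mR ^ 2 * h y) y _ _
                     (D3 y) (derivable_pt_lim_scal h (mR ^ 2) y _ (D1 y))). }
  assert (Dlap' : forall y, derivable_pt_lim (fun y => h3 y - mR ^ 2 * h1 y) y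
                                             (h4 y - mR ^ 2 * h2 y)).
  { intro y; exact (derivable_pt_lim_minus h3 (fun y => mR ^ 2 * h1 y) y _ _
                     (D4 y) (derivable_pt_lim_scal h1 (mR ^ 2) y _ (D2 y))). }
  split; [| split; [| split; [| split; [| split; [| split]]]]].
  - exists (PI / (2 * mR)), y0.
    replace (mR * (PI / (2 * mR))) with (PI / 2) by (field; lra).
    rewrite sin_PI2, Rmult_1_r; exact Hy0.
  - eexists; eexists; split; [apply (laplacian_sin_product mR h h1 h2 D1 D2) |].
    split; [apply (laplacian_sin_product mR _ _ _ Dlap Dlap') |].
    intros x y _; cbv beta.
    replace (h4 y) with (- ((lam - 2 * mR ^ 2) * h2 y + mR ^ 2 * (mR ^ 2 - lam) * h y))
      by (specialize (Hode y); lra).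
    ring.
  - intros x y [[[-> | ->] _] | [_ [-> | ->]]].
    + rewrite Rmult_0_r, sin_0; ring.
    + rewrite Hsin_PI; ring.
    + rewrite Hl1; ring.
    + rewrite Hl2; ring.
  - exists (fun x y => h1 y * sin (mR * x)); split; [apply dy_product, D1 |].
    intros x _; rewrite H1l1, H1l2; split; ring.
  - eexists; eexists; split; [apply dx_sin_product |]; split; [apply dx_cos_product |].
    intros y _; cbv beta; rewrite Rmult_0_r, sin_0, Hsin_PI; split; ring.
  - exists y0; exact Hy0.
  - exists h1, h2, h3, h4; repeat split; auto.
Qed.

Lemma cosh_cos_mode l n g A : (1 <= n)%nat -> 0 < g ->
  A * cos (g * l) = cosh (INR n * l) ->
  INR n * sinh (INR n * l) + A * g * sin (g * l) = 0 ->
  separated_mode l (INR n ^ 2 + g ^ 2) (INR n) (fun y => cosh (INR n * y) - A * cos (g * y)).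
Proof.
  intros hn hg HA H1; set (mR := INR n) in *.
  apply (separated_mode_of_profile l _ n _
    (fun y => mR * sinh (mR * y) + A * g * sin (g * y))
    (fun y => mR ^ 2 * cosh (mR * y) + A * g ^ 2 * cos (g * y))
    (fun y => mR ^ 3 * sinh (mR * y) - A * g ^ 3 * sin (g * y))
    (fun y => mR ^ 4 * cosh (mR * y) - A * g ^ 4 * cos (g * y))); auto;
    try (intro y; apply is_derive_Reals; unfold cosh, sinh; auto_derive; [auto | field]);
    cbv beta; rewrite <- ?Ropp_mult_distr_r, ?cosh_opp, ?sinh_opp, ?cos_neg, ?sin_neg; try lra.
  - intro y; fold mR; ring.
  - exists (PI / (2 * g)); cbv beta.
    replace (g * (PI / (2 * g))) with (PI / 2) by (field; lra).
    rewrite cos_PI2; pose proof (cosh_pos (mR * (PI / (2 * g)))); lra.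
Qed.

Lemma sinh_sin_mode l n g B : (1 <= n)%nat -> 0 < g ->
  B * sin (g * l) = sinh (INR n * l) ->
  INR n * cosh (INR n * l) - B * g * cos (g * l) = 0 ->
  separated_mode l (INR n ^ 2 + g ^ 2) (INR n) (fun y => sinh (INR n * y) - B * sin (g * y)).
Proof.
  intros hn hg HB H1; set (mR := INR n) in *.
  assert (hm : 0 < mR) by (apply lt_0_INR; lia).
  apply (separated_mode_of_profile l _ n _
    (fun y => mR * cosh (mR * y) - B * g * cos (g * y))
    (fun y => mR ^ 2 * sinh (mR * y) + B * g ^ 2 * sin (g * y))
    (fun y => mR ^ 3 * cosh (mR * y) + B * g ^ 3 * cos (g * y))
    (fun y => mR ^ 4 * sinh (mR * y) - B * g ^ 4 * sin (g * y))); auto;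
    try (intro y; apply is_derive_Reals; unfold cosh, sinh; auto_derive; [auto | field]);
    cbv beta; rewrite <- ?Ropp_mult_distr_r, ?cosh_opp, ?sinh_opp, ?cos_neg, ?sin_neg; try lra.
  - intro y; fold mR; ring.
  - exists (PI / g); cbv beta.
    replace (g * (PI / g)) with PI by (field; lra).
    rewrite sin_PI; pose proof PI_RGT_0.
    assert (0 < sinh (mR * (PI / g))) by (apply sinh_pos, Rmult_lt_0_compat; [| apply Rdiv_lt_0_compat]; lra).
    lra.
Qed.

Lemma convex_neg_between_zeros (f f' f'' : R -> R) a b :
  (forall x, derivable_pt_lim f x (f' x)) -> (forall x, derivable_pt_lim f' x (f'' x)) ->
  (forall x, a < x < b -> 0 < f'' x) -> f a = 0 -> f b = 0 ->
  forall y, a < y < b -> f y < 0.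
Proof.
  intros D1 D2 Pos Ha Hb y Hy.
  destruct (MVT_cor2 f f' a y) as [c1 [E1 Hc1]]; [lra | intros; apply D1 |].
  destruct (MVT_cor2 f f' y b) as [c2 [E2 Hc2]]; [lra | intros; apply D1 |].
  destruct (MVT_cor2 f' f'' c1 c2) as [d [E3 Hd]]; [lra | intros; apply D2 |].
  assert (0 < f'' d * (c2 - c1)) by (apply Rmult_lt_0_compat; [apply Pos |]; lra).
  rewrite Ha in E1; rewrite Hb in E2.
  destruct (Rle_or_lt 0 (f' c1)).
  - assert (0 < f' c2 * (b - y)) by (apply Rmult_lt_0_compat; lra); lra.
  - assert (f' c1 * (y - a) < 0) by (apply Rmult_neg_pos; lra); lra.
Qed.

Lemma cosh_cos_pos l mR g A : 0 < l -> 0 < mR -> PI / 2 < g * l < PI ->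
  A * cos (g * l) = cosh (mR * l) -> mR * sinh (mR * l) + A * g * sin (g * l) = 0 ->
  forall y, - l < y < l -> 0 < cosh (mR * y) - A * cos (g * y).
Proof.
  intros hl hm Hgl HA H1.
  assert (hg : 0 < g) by (pose proof PI_RGT_0; nra).
  assert (hA : A < 0).
  { assert (cos (g * l) < 0) by (apply cos_lt_0; lra).
    pose proof (cosh_pos (mR * l)); nra. }
  set (h := fun y => cosh (mR * y) - A * cos (g * y)).
  set (h1 := fun y => mR * sinh (mR * y) + A * g * sin (g * y)).
  set (h2 := fun y => mR ^ 2 * cosh (mR * y) + A * g ^ 2 * cos (g * y)).
  set (h3 := fun y => mR ^ 3 * sinh (mR * y) - A * g ^ 3 * sin (g * y)).
  assert (D1 : forall y, derivable_pt_lim h y (h1 y))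
    by (intro y; apply is_derive_Reals; unfold h, h1, cosh, sinh; auto_derive; [auto | field]).
  assert (D2 : forall y, derivable_pt_lim h1 y (h2 y))
    by (intro y; apply is_derive_Reals; unfold h1, h2, cosh, sinh; auto_derive; [auto | field]).
  assert (D3 : forall y, derivable_pt_lim h2 y (h3 y))
    by (intro y; apply is_derive_Reals; unfold h2, h3, cosh, sinh; auto_derive; [auto | field]).
  assert (P3 : forall y, 0 < y < l -> 0 < h3 y).
  { intros y Hy; unfold h3.
    assert (0 < sinh (mR * y)) by (apply sinh_pos; nra).
    assert (0 < sin (g * y)) by (apply sin_gt_0; nra).
    assert (0 < mR ^ 3 * sinh (mR * y)) by (apply Rmult_lt_0_compat; [apply pow_lt |]; lra).
    assert (0 < (- A) * g ^ 3 * sin (g * y))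
      by (repeat apply Rmult_lt_0_compat; try apply pow_lt; lra).
    lra. }
  assert (N1 : forall y, 0 < y < l -> h1 y < 0).
  { apply (convex_neg_between_zeros h1 h2 h3 0 l D2 D3 P3); unfold h1; [| lra].
    rewrite !Rmult_0_r, sinh_0, sin_0; ring. }
  assert (Pos : forall y, 0 <= y < l -> 0 < h y).
  { intros y Hy.
    destruct (MVT_cor2 h h1 y l) as [c [E Hc]]; [lra | intros; apply D1 |].
    assert (h1 c * (l - y) < 0) by (apply Rmult_neg_pos; [apply N1 |]; lra).
    unfold h in E at 1; lra. }
  intros y Hy; change (0 < h y).
  destruct (Rle_or_lt 0 y) as [Hy0 | Hy0]; [apply Pos; lra |].
  replace (h y) with (h (- y)) by (unfold h; rewrite <- !Ropp_mult_distr_r, cosh_opp, cos_neg; reflexivity).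
  apply Pos; lra.
Qed.

Lemma h_fun_parity k m l g :
  if Nat.odd k then forall y, h_fun k m l g (- y) = h_fun k m l g y
  else forall y, h_fun k m l g (- y) = - h_fun k m l g y.
Proof.
  unfold h_fun; destruct (Nat.odd k); intro y;
    rewrite <- !Ropp_mult_distr_r, ?cosh_opp, ?cos_neg, ?sinh_opp, ?sin_neg; ring.
Qed.

Lemma gamma_eq_odd_clamped k m l g : Nat.odd k = true -> 0 < INR m -> cos (g * l) <> 0 ->
  gamma_eq k m l g ->
  INR m * sinh (INR m * l) + cosh (INR m * l) / cos (g * l) * g * sin (g * l) = 0.
Proof.
  unfold gamma_eq; intros Hk Hm Hc; rewrite Hk; intro E.
  pose proof (cosh_pos (INR m * l)).
  replace (cosh (INR m * l) / cos (g * l) * g * sin (g * l))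
    with (cosh (INR m * l) * (g * tan (g * l))) by (unfold tan; field; exact Hc).
  rewrite E; unfold tanh; field; lra.
Qed.

Lemma gamma_eq_even_clamped k m l g : Nat.odd k = false -> 0 < l -> 0 < INR m -> 0 < g ->
  sin (g * l) <> 0 -> cos (g * l) <> 0 -> gamma_eq k m l g ->
  INR m * cosh (INR m * l) - sinh (INR m * l) / sin (g * l) * g * cos (g * l) = 0.
Proof.
  unfold gamma_eq; intros Hk hl Hm hg Hs Hc; rewrite Hk; intro E.
  pose proof (cosh_pos (INR m * l)); assert (0 < sinh (INR m * l)) by (apply sinh_pos; nra).
  replace (sinh (INR m * l) / sin (g * l) * g * cos (g * l))
    with (sinh (INR m * l) / (tan (g * l) / g)) by (unfold tan; field; lra).
  rewrite E; unfold tanh; field; lra.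
Qed.

Lemma h_fun_mode l k m g : 0 < l -> (1 <= m)%nat ->
  INR k * PI / (2 * l) < g < (INR k + 1) * PI / (2 * l) -> gamma_eq k m l g ->
  separated_mode l (INR m ^ 2 + g ^ 2) (INR m) (h_fun k m l g).
Proof.
  intros hl hm Hg Eg.
  assert (Hm : 0 < INR m) by (apply lt_0_INR; lia).
  assert (hg : 0 < g) by exact (gamma_interval_pos l k g hl Hg).
  destruct (sin_cos_neq0_quarter k (g * l)) as [Hs Hc]; [apply gamma_interval_scale; auto |].
  unfold h_fun; destruct (Nat.odd k) eqn:Hk.
  - apply cosh_cos_mode; auto; [field; exact Hc | apply gamma_eq_odd_clamped with k; auto].
  - apply sinh_sin_mode; auto; [field; exact Hs | apply gamma_eq_even_clamped with k; auto].
Qed.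

Lemma h_fun_first_pos l k m g : 0 < l -> (1 <= m)%nat ->
  INR k * PI / (2 * l) < g < (INR k + 1) * PI / (2 * l) -> gamma_eq k m l g ->
  k = 1%nat -> forall y, - l < y < l -> 0 < h_fun k m l g y.
Proof.
  intros hl hm Hg Eg -> y Hy.
  assert (Hm : 0 < INR m) by (apply lt_0_INR; lia).
  pose proof (gamma_interval_scale l 1 g hl Hg) as Hgl; simpl INR in Hgl.
  destruct (sin_cos_neq0_quarter 1 (g * l)) as [_ Hc]; [simpl INR; lra |].
  apply (cosh_cos_pos l); auto; [lra | field; exact Hc |].
  apply gamma_eq_odd_clamped with 1%nat; auto.
Qed.

Theorem theorem5p1 (l : R) (hl : 0 < l) (k m : nat) (hk : (1 <= k)%nat) (hm : (1 <= m)%nat) :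
  exists g : R,
    (INR k * PI / (2 * l) < g < (INR k + 1) * PI / (2 * l)) /\
    gamma_eq k m l g /\
    (forall g', INR k * PI / (2 * l) < g' < (INR k + 1) * PI / (2 * l) ->
                gamma_eq k m l g' -> g' = g) /\
    let lam := INR m ^ 2 + g ^ 2 in
    let h := h_fun k m l g in
    let u := u_fun k m l g in
    (* u is an eigenfunction of the boundary value problem with eigenvalue lam *)
    (exists x y, u x y <> 0) /\
    (exists L L2, laplacian_is u L /\ laplacian_is L L2 /\
       forall x y, in_Omega l x y -> L2 x y = - lam * L x y) /\
    (forall x y, on_boundary l x y -> u x y = 0) /\
    (exists uy, dy u uy /\ forall x, 0 < x < PI -> uy x (- l) = 0 /\ uy x l = 0) /\
    (exists ux uxx, dx u ux /\ dx ux uxx /\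
       forall y, - l < y < l -> uxx 0 y = 0 /\ uxx PI y = 0) /\
    (* h is a nontrivial solution of the fourth-order boundary value problem *)
    (exists y, h y <> 0) /\
    (exists h1 h2 h3 h4 : R -> R,
       (forall y, derivable_pt_lim h y (h1 y)) /\
       (forall y, derivable_pt_lim h1 y (h2 y)) /\
       (forall y, derivable_pt_lim h2 y (h3 y)) /\
       (forall y, derivable_pt_lim h3 y (h4 y)) /\
       (forall y, - l < y < l ->
          h4 y + (lam - 2 * INR m ^ 2) * h2 y + INR m ^ 2 * (INR m ^ 2 - lam) * h y = 0) /\
       h (- l) = 0 /\ h l = 0 /\ h1 (- l) = 0 /\ h1 l = 0) /\
    (* (a) parity *)
    (if Nat.odd k then forall y, h (- y) = h y else forall y, h (- y) = - h y) /\
    (* (b) positivity for k = 1 *)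
    (k = 1%nat -> forall y, - l < y < l -> 0 < h y).
Proof.
  destruct (gamma_eq_unique_root l k m hl hk hm) as (g & Hg & Eg & Ug).
  exists g; split; [exact Hg |]; split; [exact Eg |]; split; [exact Ug |].
  intros lam h u.
  destruct (h_fun_mode l k m g hl hm Hg Eg) as (U0 & Ulap & Ubd & Uy & Uxx & H0 & Hode).
  exact (conj U0 (conj Ulap (conj Ubd (conj Uy (conj Uxx (conj H0 (conj Hode
           (conj (h_fun_parity k m l g) (h_fun_first_pos l k m g hl hm Hg Eg))))))))).
Qed.
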